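(* Let $m\in\mathbb{N}$, $c=(c_1,\ldots,c_m)\in\mathbb{N}^m$ with all $c_j\ge 1$, and $\mathcal{X}=\{0,\ldots,c_1\}\times\cdots\times\{0,\ldots,c_m\}$. Let $\mathcal{V}_{\mathrm{mon}}$ be the set of all functions $\hat v:\mathcal{X}\to\mathbb{R}_{\ge 0}$ satisfying (M) monotonicity: for $a,b\in\mathcal{X}$ with $a_k\le b_k$ for all $k\in\{1,\ldots,m\}$, $\hat v(a)\le \hat v(b)$; and (N) normalization: $\hat v((0,\ldots,0))=0$. Then $\mathcal{V}_{\mathrm{mon}}$ is exactly the set of all multiset MVNNs $\mathcal{M}^{(W,b)}:\mathcal{X}\to\mathbb{R}_{\ge0}$ (over all choices of depth, layer widths, cutoffs $t^k>0$, entrywise non-negative weights $W$ and entrywise non-positive biases $b$). That is, every function satisfying (M) and (N) can be represented exactly as such a multiset MVNN, and every such multiset MVNN satisfies (M) and (N).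
   Context: A multiset MVNN (mMVNN) is a map $\mathcal{M}^{(W,b)}:\mathcal{X}\to\mathbb{R}_{\ge0}$ of the form $$\mathcal{M}^{(W,b)}(x)= W^{K}\varphi_{0,t^{K-1}}\Big(\cdots\varphi_{0,t^{1}}\big(W^{1}(Dx)+b^{1}\big)\cdots\Big),$$ where $K\in\mathbb{N}$ is the number of hidden layers; $\varphi_{0,t}(z)=\min(t,\max(0,z))$ (applied componentwise) is the bounded ReLU with cutoff $t>0$, with cutoffs $t^k>0$ for $k=1,\ldots,K-1$; $W^k\in\mathbb{R}^{d^k\times d^{k-1}}$ for $k=1,\ldots,K$ are matrices with all entries $\ge 0$, where $d^0=m$ and $d^K=1$; $b^k\in\mathbb{R}^{d^k}$ for $k=1,\ldots,K-1$ are vectors with all entries $\le 0$; and $D=\mathrm{diag}(1/c_1,\ldots,1/c_m)$ is a fixed (non-trainable) normalization matrix. *)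

From HB Require Import structures.
From mathcomp Require Import all_boot all_order all_algebra.
From mathcomp Require Import reals.
Set Implicit Arguments. Unset Strict Implicit. Unset Printing Implicit Defensive.
Import Order.TTheory GRing.Theory Num.Theory.
Local Open Scope ring_scope.

Definition brelu (R : realType) (t z : R) : R := Num.min t (Num.max 0 z).

(* A network with K-1 Hidden layers followed by Out is exactly the data
   (W^1,b^1,t^1, ..., W^{K-1},b^{K-1},t^{K-1}, W^K), K >= 1. *)
Inductive net (R : realType) : nat -> Type :=
| Out : forall n : nat, 'M[R]_(1, n) -> net R n
| Hidden : forall n p : nat, 'M[R]_(p, n) -> 'cV[R]_p -> R -> net R p -> net R n.

Fixpoint eval_net (R : realType) (n : nat) (N : net R n) : 'cV[R]_n -> R :=
  match N in net _ n return 'cV[R]_n -> R with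
  | Out _ W => fun z => (W *m z) ord0 ord0
  | Hidden _ _ W b t N' => fun z => eval_net N' (map_mx (brelu t) (W *m z + b))
  end.

Fixpoint valid_net (R : realType) (n : nat) (N : net R n) : Prop :=
  match N with
  | Out _ W => forall i j, 0 <= W i j
  | Hidden _ _ W b t N' =>
      (forall i j, 0 <= W i j) /\ (forall i j, b i j <= 0) /\ 0 < t /\ valid_net N'
  end.

Definition inX (m : nat) (c : 'I_m -> nat) (x : 'I_m -> nat) : Prop :=
  forall j, (x j <= c j)%N.

Definition normalize (R : realType) (m : nat) (c : 'I_m -> nat) (x : 'I_m -> nat)
  : 'cV[R]_m := \col_j ((x j)%:R / (c j)%:R).

Definition mMVNN (R : realType) (m : nat) (c : 'I_m -> nat) (N : net R m)
  (x : 'I_m -> nat) : R := eval_net N (normalize R c x).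

Definition Vmon (R : realType) (m : nat) (c : 'I_m -> nat)
  (v : ('I_m -> nat) -> R) : Prop :=
  (forall x, inX c x -> 0 <= v x) /\
  (forall a b, inX c a -> inX c b -> (forall k, (a k <= b k)%N) -> v a <= v b) /\
  v (fun _ => 0%N) = 0.

From HB Require Import structures.
From mathcomp Require Import all_boot all_order all_algebra.
From mathcomp Require Import reals.
From mathcomp Require Import zify.
Set Implicit Arguments.
Unset Strict Implicit.
Unset Printing Implicit Defensive.
Import Order.TTheory GRing.Theory Num.Theory.
Local Open Scope ring_scope.

(* Networks are monotone because bounded ReLUs are monotone and weights are
   non-negative; they vanish at 0 because biases are non-positive.
   Conversely, given v, a three-hidden-layer network with cutoffs 1 works on
   integer-valued pre-activations, where brelu 1 (a - b) = [b < a]. The first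
   layer writes x in unary, the second has a neuron for every grid point
   0 != z that fires iff z <= x (comparing sum_j min(z_j, x_j) with sum_j z_j),
   and the third has a neuron for every positive value s of v that fires iff
   some z <= x has v z >= s, i.e. by monotonicity iff v x >= s. The output
   layer weights these by the gaps between consecutive sorted values, which
   telescope to v x. *)

Section BoundedReLU.
Variable R : realType.

Lemma le_brelu (t x y : R) : x <= y -> brelu t x <= brelu t y.
Proof. by move=> le_xy; apply: le_min2 => //; apply: le_max2. Qed.

Lemma brelu_npos (t x : R) : 0 < t -> x <= 0 -> brelu t x = 0.
Proof. by move=> t_gt0 x_le0; rewrite /brelu max_l // min_r // ltW. Qed.

Lemma brelu1_natB (a b : nat) : brelu (1 : R) (a%:R - b%:R) = (b < a)%N%:R.
Proof.
rewrite /brelu; case: ltnP => [lt_ba | le_ab].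
- have le1 : 1 <= a%:R - b%:R :> R by rewrite lerBrDl natr1 ler_nat.
  by rewrite max_r ?min_l // (le_trans ler01).
- by rewrite max_l ?min_r // subr_le0 ler_nat.
Qed.

Lemma brelu1_nat (a : nat) : brelu (1 : R) a%:R = (0 < a)%N%:R.
Proof. by rewrite -brelu1_natB subr0. Qed.

End BoundedReLU.

Section Telescoping.
Variable R : realDomainType.

Lemma telescope_thresholds (s : seq R) (p a : R) :
  path <=%R p s -> a \in p :: s ->
  \sum_(k < size s) (s`_k - nth 0 (p :: s) k) * (s`_k <= a)%R%:R = a - p.
Proof.
elim: s p => [|q s IHs] p /=.
  by move=> _; rewrite inE big_ord0 => /eqP ->; rewrite subrr.
move=> /andP[le_pq path_qs] a_in; rewrite big_ord_recl /=.
have ge_q : all (>= q) s.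
  by rewrite (path_sortedE le_trans) in path_qs; case/andP: path_qs.
have [le_qa | lt_aq] := leP q a.
  have a_in' : a \in q :: s.
    move: a_in; rewrite inE => /orP[/eqP a_p | //].
    suff -> : a = q by rewrite mem_head.
    by apply/le_anti; rewrite le_qa a_p le_pq.
  by rewrite (IHs q) // mulr1 addrC addrA subrK.
have a_p : a = p.
  move: a_in; rewrite !inE => /orP[/eqP // | /orP[/eqP a_q | a_s]].
    by move: lt_aq; rewrite a_q ltxx.
  by move: lt_aq; rewrite ltNge (allP ge_q).
rewrite big1 => [|k _]; first by rewrite a_p mulr0 subrr addr0.
by rewrite add0n lt_geF ?mulr0 // (lt_le_trans lt_aq) // (allP ge_q) // mem_nth.
Qed.

End Telescoping.

Lemma sum_ltn_ord (n a : nat) : (\sum_(l < n) (l < a) = minn a n)%N.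
Proof. by elim: n => [|n IHn]; rewrite ?big_ord0 ?minn0 // big_ord_recr /= IHn; lia. Qed.

Lemma geq_sum_minn (I : finType) (z x : I -> nat) :
  (\sum_i z i <= \sum_i minn (z i) (x i))%N = [forall i, z i <= x i]%N.
Proof.
apply/idP/forallP => [le_sum i | le_zx]; last first.
  by apply/eq_leq/eq_bigr => i _; apply/esym/minn_idPl.
rewrite leqNgt; apply/negP => lt_xz; move: le_sum.
rewrite (bigD1 i) // [X in (_ <= X)%N](bigD1 i) //=.
have : (\sum_(j | j != i) minn (z j) (x j) <= \sum_(j | j != i) z j)%N.
  by apply: leq_sum => j _; rewrite geq_minl.
lia.
Qed.

Section NetMonotone.
Variable R : realType.

Lemma le_eval_net (n : nat) (N : net R n) (z1 z2 : 'cV[R]_n) :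
  valid_net N -> (forall i, z1 i 0 <= z2 i 0) -> eval_net N z1 <= eval_net N z2.
Proof.
elim: N z1 z2 => [k W | k p W b t N IHN] z1 z2 /=.
  by move=> W_ge0 le_z; rewrite !mxE ler_sum // => i _; rewrite ler_wpM2l.
move=> [W_ge0 [_ [_ validN]]] le_z; apply: IHN => // i.
rewrite !mxE le_brelu // lerD2r ler_sum // => j _.
by rewrite ler_wpM2l.
Qed.

Lemma eval_net0 (n : nat) (N : net R n) : valid_net N -> eval_net N 0 = 0.
Proof.
elim: N => [k W | k p W b t N IHN] /=; first by rewrite mulmx0 mxE.
move=> [_ [b_le0 [t_gt0 validN]]]; rewrite mulmx0 add0r -[RHS](IHN validN).
by congr eval_net; apply/matrixP => i j; rewrite !mxE brelu_npos.
Qed.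

Lemma mMVNN_Vmon (m : nat) (c : 'I_m -> nat) (N : net R m) :
  valid_net N -> Vmon c (mMVNN c N).
Proof.
move=> validN; have normalize0 : normalize R c (fun=> 0%N) = 0.
  by apply/matrixP => i j; rewrite !mxE mul0r.
split; [|split]; last by rewrite /mMVNN normalize0 eval_net0.
- move=> x _; rewrite -(eval_net0 validN) -normalize0 le_eval_net // => i.
  by rewrite !mxE mul0r divr_ge0.
- move=> a b _ _ le_ab; rewrite le_eval_net // => i.
  by rewrite !mxE ler_wpM2r ?invr_ge0 // ler_nat.
Qed.

End NetMonotone.

Lemma eq_in_Vmon (R : realType) (m : nat) (c : 'I_m -> nat) (v w : ('I_m -> nat) -> R) :
  (forall x, inX c x -> v x = w x) -> Vmon c w -> Vmon c v.
Proof.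
move=> eq_vw [w_ge0 [w_mono w0]].
split; [|split]; last by rewrite eq_vw.
- by move=> x Xx; rewrite eq_vw // w_ge0.
- by move=> a b Xa Xb le_ab; rewrite !eq_vw // w_mono.
Qed.

Section Construction.
Variables (R : realType) (m : nat) (c : 'I_m -> nat) (v : ('I_m -> nat) -> R).
Hypothesis c_gt0 : forall j, (0 < c j)%N.
Hypothesis v_ge0 : forall x, inX c x -> 0 <= v x.
Hypothesis v_mono :
  forall a b, inX c a -> inX c b -> (forall k, (a k <= b k)%N) -> v a <= v b.
Hypothesis v0 : v (fun=> 0%N) = 0.

Local Notation layer W b z := (map_mx (brelu 1) (W *m z + b)).

Definition cmax := (\max_j c j)%N.

(* Neuron (j, l) of the first layer fires iff l < x_j. *)
Definition Digit := ('I_m * 'I_cmax)%type.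
(* Grid points index the second layer; the grid contains X and [clip] maps it
   onto X. *)
Definition Grid := {ffun 'I_m -> 'I_cmax.+1}.

Definition digit (i : 'I_#|{: Digit}|) : Digit := enum_val i.
Definition gridpt (i : 'I_#|{: Grid}|) : Grid := enum_val i.

Definition clip (z : Grid) (j : 'I_m) : nat := minn (z j) (c j).
Definition weight (z : Grid) : nat := (\sum_j z j)%N.
Definition overlap (z : Grid) (x : 'I_m -> nat) : nat := (\sum_j minn (z j) (x j))%N.
Definition below (z : Grid) (x : 'I_m -> nat) : bool := [forall j, z j <= x j]%N.
Definition grid_of (x : 'I_m -> nat) : Grid := [ffun j => inord (x j)].

Definition levels : seq R :=
  sort <=%R [seq y <- [seq v (clip z) | z <- enum Grid] | 0 < y].

Definition W1 : 'M[R]_(#|{: Digit}|, m) :=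
  \matrix_(i, j) if (digit i).1 == j then (c j)%:R else 0.
Definition b1 : 'cV[R]_#|{: Digit}| := \col_i - ((digit i).2 : nat)%:R.
Definition W2 : 'M[R]_(#|{: Grid}|, #|{: Digit}|) :=
  \matrix_(i, k) ((digit k).2 < gridpt i (digit k).1)%N%:R.
(* The predecessor is truncated, so the neuron of the zero grid point never fires. *)
Definition b2 : 'cV[R]_#|{: Grid}| := \col_i - (weight (gridpt i)).-1%:R.
Definition W3 : 'M[R]_(size levels, #|{: Grid}|) :=
  \matrix_(k, i) (levels`_k <= v (clip (gridpt i)))%R%:R.
Definition W4 : 'M[R]_(1, size levels) :=
  \matrix_(_, k) (levels`_k - nth 0 (0 :: levels) k).

Definition vmon_net : net R m :=
  Hidden W1 b1 1 (Hidden W2 b2 1 (Hidden W3 0 1 (Out W4))).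

Lemma cmax_ge j : (c j <= cmax)%N.
Proof. exact: leq_bigmax. Qed.

Lemma clipX z : inX c (clip z).
Proof. by move=> j; rewrite geq_minr. Qed.

Lemma grid_ofE x j : inX c x -> grid_of x j = x j :> nat.
Proof. by move=> Xx; rewrite ffunE inordK // ltnS (leq_trans (Xx j)) ?cmax_ge. Qed.

Lemma v_clip_grid_of x : inX c x -> v (clip (grid_of x)) = v x.
Proof.
move=> Xx; have clipE j : clip (grid_of x) j = x j.
  by rewrite /clip grid_ofE ?(minn_idPl _).
by apply/le_anti; rewrite !v_mono ?clipX // => j; rewrite clipE.
Qed.

Lemma path_levels : path <=%R 0 levels.
Proof.
rewrite (path_sortedE le_trans) sort_sorted ?andbT; last exact: le_total.
by rewrite all_sort; apply/allP => y; rewrite mem_filter => /andP[/ltW].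
Qed.

Lemma levels_gt0 k : (k < size levels)%N -> 0 < levels`_k.
Proof. by move=> /(mem_nth 0); rewrite mem_sort mem_filter => /andP[]. Qed.

Lemma v_in_levels x : inX c x -> v x \in 0 :: levels.
Proof.
move=> Xx; rewrite inE mem_sort mem_filter; have [->|vx_gt0 /=] := eqVneq (v x) 0 => //.
rewrite lt_def vx_gt0 v_ge0 //= -v_clip_grid_of //.
by apply: map_f; rewrite mem_enum.
Qed.

Lemma vmon_net_valid : valid_net vmon_net.
Proof.
do !split; rewrite ?ltr01 // => i j; rewrite mxE ?oppr_le0 ?ler0n //.
  by case: eqP.
rewrite subr_ge0 [X in _ <= X](_ : _ = nth 0 (0 :: levels) j.+1) //.
have lt_j : (j < size levels)%N := ltn_ord j.
by rewrite (sorted_leq_nth le_trans lexx) ?inE /= ?path_levels ?ltnS ?lt_j ?(ltnW lt_j).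
Qed.

Lemma layer1E x :
  layer W1 b1 (normalize R c x) = \col_i ((digit i).2 < x (digit i).1)%N%:R.
Proof.
apply/matrixP => i k; rewrite !mxE.
under eq_bigr => j _ do rewrite !mxE.
rewrite (bigD1 (digit i).1) //= eqxx big1 ?addr0 => [|j /negbTE ne_j]; last first.
  by rewrite eq_sym ne_j mul0r.
by rewrite mulrC divfK ?pnatr_eq0 -?lt0n ?c_gt0 // brelu1_natB.
Qed.

Lemma overlap_digits (z : Grid) x :
  (\sum_(k < #|{: Digit}|) ((digit k).2 < z (digit k).1) && ((digit k).2 < x (digit k).1)
   = overlap z x)%N.
Proof.
rewrite /overlap /digit.
rewrite -(big_enum_val (fun d : Digit => ((d.2 < z d.1) && (d.2 < x d.1))%N : nat)).
rewrite -(pair_big predT predT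
  (fun (j : 'I_m) (l : 'I_cmax) => ((l < z j) && (l < x j))%N : nat)) /=.
apply: eq_bigr => j _; under eq_bigr => l _ do rewrite -leq_min.
by rewrite sum_ltn_ord; apply/minn_idPl; rewrite geq_min -ltnS ltn_ord.
Qed.

Lemma pred_weight_lt_overlap (z : Grid) x :
  ((weight z).-1 < overlap z x)%N = (0 < weight z)%N && below z x.
Proof.
have : (overlap z x <= weight z)%N by apply: leq_sum => j _; rewrite geq_minl.
rewrite /below -geq_sum_minn -/(weight z) -/(overlap z x).
by case: (weight z) => [|n] //=; rewrite leqn0 => /eqP ->.
Qed.

Lemma layer2E x :
  layer W2 b2 (\col_i ((digit i).2 < x (digit i).1)%N%:R)
  = \col_i ((0 < weight (gridpt i))%N && below (gridpt i) x)%:R.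
Proof.
apply/matrixP => i k; rewrite !mxE.
under eq_bigr => d _ do rewrite !mxE -natrM mulnb.
by rewrite -natr_sum overlap_digits brelu1_natB pred_weight_lt_overlap.
Qed.

Lemma upset_cover x s : inX c x -> 0 < s ->
  (s <= v x) = [exists z, (s <= v (clip z)) && ((0 < weight z)%N && below z x)].
Proof.
move=> Xx s_gt0; apply/idP/existsP => [le_s | [z /and3P[le_s _ /forallP le_zx]]].
  exists (grid_of x); rewrite v_clip_grid_of // le_s /=; apply/andP; split.
    rewrite lt0n; apply: contraTneq le_s => /eqP; rewrite sum_nat_eq0 => /forallP zero.
    have : v x <= v (fun=> 0%N).
      by rewrite v_mono // => j; rewrite -grid_ofE // (eqP (zero j)).
    by rewrite v0 -ltNge => /le_lt_trans; apply.
  by apply/forallP => j; rewrite grid_ofE.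
apply: (le_trans le_s); apply: v_mono => // [|j]; first exact: clipX.
by rewrite /clip geq_min le_zx.
Qed.

Lemma layer3E x : inX c x ->
  layer W3 0 (\col_i ((0 < weight (gridpt i))%N && below (gridpt i) x)%:R)
  = \col_k (levels`_k <= v x)%R%:R.
Proof.
move=> Xx; apply/matrixP => k l; rewrite !mxE addr0.
under eq_bigr => i _ do rewrite !mxE -natrM mulnb.
rewrite -natr_sum brelu1_nat (upset_cover Xx (levels_gt0 (ltn_ord k))).
rewrite /gridpt -(big_enum_val (fun z : Grid =>
  ((levels`_k <= v (clip z))%R && ((0 < weight z)%N && below z x)) : nat)).
rewrite lt0n sum_nat_eq0 negb_forall; congr ((nat_of_bool _)%:R).
by apply: eq_existsb => z; rewrite eqb0 negbK.
Qed.

Lemma vmon_netE x : inX c x -> mMVNN c vmon_net x = v x.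
Proof.
move=> Xx; rewrite /mMVNN /= layer1E layer2E layer3E // mxE.
under eq_bigr => k _ do rewrite !mxE.
by rewrite telescope_thresholds ?path_levels ?v_in_levels ?subr0.
Qed.

End Construction.

Theorem theorem1 (R : realType) (m : nat) (c : 'I_m -> nat)
  (hc : forall j, (0 < c j)%N) (v : ('I_m -> nat) -> R) :
  Vmon c v <->
  exists N : net R m, valid_net N /\ (forall x, inX c x -> v x = mMVNN c N x).
Proof.
split => [[v_ge0 [v_mono v0]] | [N [validN v_eq]]].
  exists (vmon_net c v); split; first exact: vmon_net_valid.
  by move=> x Xx; rewrite vmon_netE.
exact: eq_in_Vmon v_eq (mMVNN_Vmon c validN).
Qed.
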